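(* Let $X$ be a finite set, $t_1<\dots<t_M$ real numbers and $(\mathcal{P}^{t_m})_{m\le M}$ partitions of $X$. Then the persistent hierarchy satisfies $h(t)=1$ for all $t\ge t_1$ if and only if the sequence is strictly hierarchical, i.e. $\mathcal{P}^{t_1}\le\mathcal{P}^{t_2}\le\dots\le\mathcal{P}^{t_M}$.
   Context: A partition of $X$ is a collection of non-empty pairwise disjoint subsets (clusters) whose union is $X$; $\#\mathcal{P}$ is its number of clusters. $\mathcal{P}\le\mathcal{Q}$ means every cluster of $\mathcal{P}$ is contained in a cluster of $\mathcal{Q}$. For a finite non-empty set $C$, $\Delta C$ is the set of all non-empty subsets of $C$. The Multiscale Clustering Filtration is $K^{t_m}:=\bigcup_{l\le m}\bigcup_{C\in\mathcal{P}^{t_l}}\Delta C$. For $t\ge t_1$, let $m$ be the largest index with $t_m\le t$ and set $\mathcal{P}^t:=\mathcal{P}^{t_m}$, $K^t:=K^{t_m}$. Let $\beta_0^t$ be the number of connected components of $K^t$ (rank of $H_0(K^t)$). The persistent hierarchy is $h(t):=\beta_0^t/\#\mathcal{P}^t$ for $t\ge t_1$. *)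

From mathcomp Require Import all_boot all_order all_algebra.
From mathcomp Require Import reals.
Set Implicit Arguments. Unset Strict Implicit. Unset Printing Implicit Defensive.
Import Order.TTheory GRing.Theory Num.Theory.
Local Open Scope ring_scope.

(* The ground set X is the finite type T; a partition of X is a
   P : {set {set T}} with [partition P [set: T]] (finset.v: cover, pairwise
   disjoint, no empty block). Filtration indices are 'I_n.+1 (n.+1 = M >= 1). *)

Definition refines (T : finType) (P Q : {set {set T}}) : Prop :=
  forall C, C \in P -> exists2 D, D \in Q & C \subset D.

Section MCF.
Variables (R : realType) (T : finType) (n : nat).
Variables (t : 'I_n.+1 -> R) (P : 'I_n.+1 -> {set {set T}}).

(* largest index m with t_m <= x (meaningful for x >= t_1) *)
Definition cur_idx (x : R) : 'I_n.+1 :=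
  inord (\max_(i < n.+1 | t i <= x) (i : nat)).

(* 1-skeleton adjacency of K^{t_m}: x,y lie together in some simplex of K^{t_m},
   i.e. in a common cluster C of P^{t_l} for some l <= m. *)
Definition mcf_adj (m : 'I_n.+1) : rel T :=
  fun x y => [exists l : 'I_n.+1, ((l <= m)%N &&
               [exists C in P l, (x \in C) && (y \in C)])].

Definition mcf_components (m : 'I_n.+1) : {set {set T}} :=
  [set [set y | connect (mcf_adj m) x y] | x : T].

Definition beta0 (x : R) : nat := #|mcf_components (cur_idx x)|.

Definition nclusters (x : R) : nat := #|P (cur_idx x)|.

Definition hier (x : R) : R := (beta0 x)%:R / (nclusters x)%:R.

End MCF.

From mathcomp Require Import all_boot all_order all_algebra.
From mathcomp Require Import reals.
Set Implicit Arguments. Unset Strict Implicit. Unset Printing Implicit Defensive.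
Import Order.TTheory GRing.Theory Num.Theory.
Local Open Scope ring_scope.

(* The connected components of K^{t_m} form a partition of X refined by every
   P^{t_l} with l <= m, in particular by P^{t_m}.  A partition refining another
   has at least as many blocks, with equality only if the two coincide; so
   beta_0^{t_m} = #P^{t_m} iff the components are the clusters of P^{t_m}, iff
   every earlier cluster lies inside a cluster of P^{t_m}.  Evaluating h at the
   critical values t_m and using transitivity of refinement reduces this to
   consecutive partitions. *)

Lemma refines_refl (T : finType) (P : {set {set T}}) : refines P P.
Proof. by move=> C PC; exists C. Qed.

Lemma refines_trans (T : finType) (P Q S : {set {set T}}) :
  refines P Q -> refines Q S -> refines P S.
Proof.
move=> PQ QS C PC; have [D QD CD] := PQ C PC; have [E SE DE] := QS D QD.
by exists E; last exact: subset_trans DE.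
Qed.

Section Coarsening.
Variables (T : finType) (D : {set T}) (P Q : {set {set T}}).
Hypotheses (partP : partition P D) (partQ : partition Q D) (QP : refines Q P).

Let tiP := partition_trivIset partP.

Let coverP x : x \in D -> x \in cover P.
Proof. by rewrite (cover_partition partP). Qed.

Let coverQ x : x \in D -> x \in cover Q.
Proof. by rewrite (cover_partition partQ). Qed.

Lemma refines_pblock C x : C \in Q -> x \in C -> C \subset pblock P x.
Proof.
by move=> QC Cx; have [B PB CB] := QP QC; rewrite (def_pblock tiP PB (subsetP CB x Cx)).
Qed.

Let coarsen (C : {set T}) : {set T} := \bigcup_(x in C) pblock P x.

Let coarsen_pblock C x : C \in Q -> x \in C -> coarsen C = pblock P x.
Proof.
move=> QC Cx; apply/setP => y; apply/bigcupP/idP => [[z Cz]|]; last by exists x.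
have [B PB CB] := QP QC.
by rewrite (def_pblock tiP PB (subsetP CB z Cz)) (def_pblock tiP PB (subsetP CB x Cx)).
Qed.

Let coarsen_mem C : C \in Q -> coarsen C \in P.
Proof.
move=> QC; have /set0Pn [x Cx] := partition_neq0 partQ QC.
by rewrite (coarsen_pblock QC Cx) pblock_mem // coverP // (subsetP (partitionS partQ QC)).
Qed.

Let imset_coarsen : coarsen @: Q = P.
Proof.
apply/setP => B; apply/imsetP/idP => [[C QC ->]|PB]; first exact: coarsen_mem.
have /set0Pn [x Bx] := partition_neq0 partP PB.
have Dx : x \in D by rewrite (subsetP (partitionS partP PB)).
have Qx : x \in pblock Q x by rewrite mem_pblock coverQ.
exists (pblock Q x); first by rewrite pblock_mem ?coverQ.
by rewrite (coarsen_pblock _ Qx) ?pblock_mem ?coverQ // (def_pblock tiP PB Bx).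
Qed.

Lemma refines_card_leq : (#|P| <= #|Q|)%N.
Proof. by rewrite -imset_coarsen leq_imset_card. Qed.

(* Equal cardinality makes [coarsen] injective on Q; a block C and the block
   of any y in [coarsen C] then have the same image, so [coarsen C] = C. *)
Lemma refines_card_eq : #|P| = #|Q| -> P = Q.
Proof.
move=> card_PQ.
have /imset_injP inj_coarsen : #|coarsen @: Q| == #|Q| by rewrite imset_coarsen card_PQ.
rewrite -imset_coarsen -[RHS]imset_id; apply: eq_in_imset => C QC.
have /set0Pn [x Cx] := partition_neq0 partQ QC.
apply/eqP; rewrite eqEsubset; apply/andP; split; last first.
  by rewrite (coarsen_pblock QC Cx) refines_pblock.
rewrite (coarsen_pblock QC Cx); apply/subsetP => y xy.
have Dx : x \in D by rewrite (subsetP (partitionS partQ QC)).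
have Dy : y \in D by rewrite (subsetP (partitionS partP _) y xy) ?pblock_mem ?coverP.
have Qy : y \in pblock Q y by rewrite mem_pblock coverQ.
have QQy : pblock Q y \in Q by rewrite pblock_mem ?coverQ.
suff <- : pblock Q y = C by [].
apply: inj_coarsen => //.
by rewrite (coarsen_pblock QQy Qy) (coarsen_pblock QC Cx) (same_pblock tiP xy).
Qed.

End Coarsening.

Lemma refines_anti (T : finType) (D : {set T}) (P Q : {set {set T}}) :
  partition P D -> partition Q D -> refines P Q -> refines Q P -> P = Q.
Proof.
move=> partP partQ PQ QP; apply: (refines_card_eq partP partQ QP).
apply/eqP; rewrite eqn_leq (refines_card_leq partP partQ QP).
exact: refines_card_leq partQ partP PQ.
Qed.

Section Components.
Variables (T : finType) (n : nat) (P : 'I_n.+1 -> {set {set T}}).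
Hypothesis partP : forall i, partition (P i) [set: T].

Let tiP i := partition_trivIset (partP i).

Let coverP i x : x \in cover (P i).
Proof. by rewrite (cover_partition (partP i)) inE. Qed.

Lemma mcf_adj_cluster (m l : 'I_n.+1) C x y :
  (l <= m)%N -> C \in P l -> x \in C -> y \in C -> mcf_adj P m x y.
Proof.
move=> lm PC Cx Cy; apply/existsP; exists l; rewrite lm.
by apply/existsP; exists C; rewrite PC Cx Cy.
Qed.

Lemma mcf_adj_sym (m : 'I_n.+1) : symmetric (mcf_adj P m).
Proof.
apply: symmetric_from_pre => x y /existsP [l /andP [lm /existsP [C /and3P [PC Cx Cy]]]].
exact: mcf_adj_cluster lm PC Cy Cx.
Qed.

Lemma mcf_components_partition (m : 'I_n.+1) : partition (mcf_components P m) [set: T].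
Proof.
have csym := sym_connect_sym (mcf_adj_sym m).
have -> : mcf_components P m = equivalence_partition (connect (mcf_adj P m)) [set: T].
  by apply/setP => B; apply/imsetP/imsetP => -[x _ ->]; exists x => //;
    apply/setP => y; rewrite !inE.
apply: equivalence_partitionP; apply/equivalence_relP_in; split => [x _|x y _ _ xy z _].
  exact: connect0.
exact: same_connect.
Qed.

Lemma refines_mcf_components (m l : 'I_n.+1) :
  (l <= m)%N -> refines (P l) (mcf_components P m).
Proof.
move=> lm C PC; have /set0Pn [x Cx] := partition_neq0 (partP l) PC.
exists [set y | connect (mcf_adj P m) x y]; first exact: imset_f.
by apply/subsetP => y Cy; rewrite inE connect1 // (mcf_adj_cluster lm PC Cx Cy).
Qed.

(* Every edge of K^{t_m} stays inside a cluster of P^{t_m}, so the clusters of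
   P^{t_m} are closed under connectivity. *)
Lemma mcf_components_refines (m : 'I_n.+1) :
  (forall l : 'I_n.+1, (l <= m)%N -> refines (P l) (P m)) ->
  refines (mcf_components P m) (P m).
Proof.
move=> refP _ /imsetP [x _ ->]; exists (pblock (P m) x); first exact: pblock_mem.
have closed_pblock : closed (mcf_adj P m) (pblock (P m) x).
  move=> y z /existsP [l /andP [lm /existsP [C /and3P [PC Cy Cz]]]].
  have [B PmB CB] := refP l lm C PC.
  rewrite -!eq_pblock ?(def_pblock (tiP m) PmB (subsetP CB y Cy)) //.
  by rewrite (def_pblock (tiP m) PmB (subsetP CB z Cz)).
apply/subsetP => y; rewrite inE => /(closed_connect closed_pblock) <-.
by rewrite mem_pblock.
Qed.

Lemma card_mcf_components_eq (m : 'I_n.+1) :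
  #|mcf_components P m| = #|P m| <->
  (forall l : 'I_n.+1, (l <= m)%N -> refines (P l) (P m)).
Proof.
have partC := mcf_components_partition m.
have PmC := refines_mcf_components (leqnn m).
split => [card_eq l lm|refP].
  rewrite -(refines_card_eq partC (partP m) PmC) //.
  exact: refines_mcf_components.
by rewrite (refines_anti partC (partP m) (mcf_components_refines refP) PmC).
Qed.

End Components.

Lemma refines_chain (T : finType) (n : nat) (P : 'I_n.+1 -> {set {set T}}) :
  (forall i : 'I_n, refines (P (inord i)) (P (inord i.+1))) ->
  forall l m : 'I_n.+1, (l <= m)%N -> refines (P l) (P m).
Proof.
move=> refP; suff chain a b : (a <= b < n.+1)%N -> refines (P (inord a)) (P (inord b)).
  by move=> l m lm; rewrite -[l]inord_val -[m]inord_val; apply: chain; rewrite lm /=.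
elim: b => [|b IHb] /andP [ab bn]; first by case: a ab => // _; apply: refines_refl.
case: ltngtP ab => // [ab _|-> _]; last exact: refines_refl.
apply: refines_trans (IHb _) (refP (Ordinal (bn : (b < n)%N))).
by rewrite -ltnS ab (ltnW bn).
Qed.

Section Hierarchy.
Variables (R : realType) (T : finType) (n : nat).
Variables (t : 'I_n.+1 -> R) (P : 'I_n.+1 -> {set {set T}}).

Lemma cur_idx_at (m : 'I_n.+1) :
  (forall i j : 'I_n.+1, (i < j)%N -> t i < t j) -> cur_idx t (t m) = m.
Proof.
move=> t_incr; apply: val_inj => /=; rewrite inordK; last first.
  by rewrite ltnS; apply/bigmax_leqP => j _; rewrite -ltnS.
apply/eqP; rewrite eqn_leq (leq_bigmax_cond _ (lexx (t m))) andbT.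
apply/bigmax_leqP => j tjm; rewrite leqNgt; apply/negP => /t_incr.
by rewrite ltNge tjm.
Qed.

Lemma hier_eq1 (x : R) :
  (0 < #|T|)%N -> (forall i, partition (P i) [set: T]) ->
  hier t P x = 1 <->
  (forall l : 'I_n.+1, (l <= cur_idx t x)%N -> refines (P l) (P (cur_idx t x))).
Proof.
move=> /card_gt0P [y _] partP; rewrite -card_mcf_components_eq //.
have Pm_neq0 : (#|P (cur_idx t x)|%:R : R) != 0.
  by rewrite pnatr_eq0 -lt0n; apply/card_gt0P; exists (pblock (P (cur_idx t x)) y);
    rewrite pblock_mem // (cover_partition (partP _)) inE.
rewrite /hier /beta0 /nclusters; split => [/divr1_eq/eqP|->]; last exact: divff.
by rewrite eqr_nat => /eqP.
Qed.

End Hierarchy.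

Theorem corollary1 (R : realType) (T : finType) (n : nat)
    (t : 'I_n.+1 -> R) (P : 'I_n.+1 -> {set {set T}}) :
  (0 < #|T|)%N ->
  (forall i j : 'I_n.+1, (i < j)%N -> t i < t j) ->
  (forall i, partition (P i) [set: T]) ->
  (forall x : R, t ord0 <= x -> hier t P x = 1) <->
  (forall i : 'I_n, refines (P (inord i)) (P (inord i.+1))).
Proof.
move=> T_gt0 t_incr partP; split => [hier1 i|/refines_chain refP x _]; last first.
  by apply/(hier_eq1 t _ T_gt0 partP) => l; apply: refP.
pose m : 'I_n.+1 := inord i.+1.
have val_m : (m : nat) = i.+1 by rewrite inordK // ltnS.
have t0m : t ord0 <= t m by rewrite ltW // t_incr // val_m.
have /(hier_eq1 t _ T_gt0 partP) := hier1 _ t0m; rewrite cur_idx_at //; apply.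
by rewrite val_m inordK // ltnS ltnW.
Qed.
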